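(* Let $n\ge1$ and $d\geq 0$. For every homogeneous polynomial representation $(\sigma,U)$ of $\mathrm{GL}_n(\mathbf C)$ of degree $d$ and every finite-dimensional complex representation $(\rho,V)$ of $S_n$, there is an isomorphism \[ \mathrm{Hom}_{\mathrm{GL}_n(\mathbf C)}(U,\mathrm{Ind}^dV)\cong\mathrm{Hom}_{S_n}(\mathrm{Res}^dU,V), \] natural in $U$ and $V$; that is, the functor $\mathrm{Ind}^d:\mathrm{Rep}\,S_n\to\mathrm{Rep}^d\,\mathrm{GL}_n(\mathbf C)$ is right adjoint to $\mathrm{Res}^d$.
   Context: $S_n$ is regarded as the subgroup of permutation matrices in $\mathrm{GL}_n(\mathbf C)$. A polynomial representation $\rho:\mathrm{GL}_n(\mathbf C)\to\mathrm{GL}(W)$ on a finite-dimensional space is one whose matrix entries are polynomials in the entries of $g$; it is homogeneous of degree $d$ if these polynomials are all homogeneous of degree $d$. $\mathrm{Rep}^d\,\mathrm{GL}_n(\mathbf C)$ is the category of such representations, $\mathrm{Rep}\,S_n$ the category of finite-dimensional complex representations of $S_n$, and $\mathrm{Res}^d$ sends $\rho$ to $\rho|_{S_n}$. Let $M_n$ be the space of $n\times n$ complex matrices and $P^d(M_n)$ the space of homogeneous polynomials of degree $d$ in the entries of $Q\in M_n$; $P^d(M_n)\otimes V$ is viewed as the space of $V$-valued homogeneous degree-$d$ polynomial functions on $M_n$. For $(\rho,V)\in\mathrm{Rep}\,S_n$, define \[ \mathrm{Ind}^dV=\{f\in P^d(M_n)\otimes V: f(wQ)=\rho(w)f(Q)\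 \text{for all }w\in S_n,\ Q\in M_n\}, \] with $\mathrm{GL}_n(\mathbf C)$-action $(\mathrm{Ind}^d\rho(g)f)(Q)=f(Qg)$; this is an object of $\mathrm{Rep}^d\,\mathrm{GL}_n(\mathbf C)$. For $\phi\in\mathrm{Hom}_{S_n}(V,W)$, $(\mathrm{Ind}^d\phi f)(Q)=\phi(f(Q))$. *)

From HB Require Import structures.
From mathcomp Require Import all_boot all_order all_algebra all_fingroup.
From mathcomp Require Import mpoly.
From mathcomp Require Export complex.
From mathcomp Require Export reals.

Set Implicit Arguments.
Unset Strict Implicit.
Unset Printing Implicit Defensive.

Import GRing.Theory.
Local Open Scope ring_scope.

Section Defs.
Variable C : fieldType.
Variable n d : nat.

Definition mx_vars (Q : 'M[C]_n) : 'I_(n * n) -> C := fun k => mxvec Q 0 k.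

Definition is_hpoly_fun (f : 'M[C]_n -> C) : Prop :=
  exists p : {mpoly C[n * n]}, p \is d.-homog /\ forall Q, f Q = p.@[mx_vars Q].

(* Objects of Rep^d GL_n(C): a finite-dimensional space C^m (column vectors)
   with a homogeneous polynomial representation of degree d.  gl_act is the
   polynomial map M_n -> M_m whose entries are the polynomials; it is a group
   homomorphism on GL_n. *)
Record glrep := GLRep {
  gl_dim : nat;
  gl_act : 'M[C]_n -> 'M[C]_gl_dim;
  gl_poly : forall i j, is_hpoly_fun (fun g => gl_act g i j);
  gl_act1 : gl_act 1%:M = 1%:M;
  gl_actM : forall g h, g \in unitmx -> h \in unitmx ->
              gl_act (g *m h) = gl_act g *m gl_act h }.

Record snrep := SnRep {
  sn_dim : nat;
  sn_act : 'S_n -> 'M[C]_sn_dim;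
  sn_act1 : sn_act 1%g = 1%:M;
  sn_actM : forall s t, sn_act (s * t)%g = sn_act s *m sn_act t }.

(* S_n is identified with the permutation matrices (perm_mx is a group
   homomorphism, perm_mxM); Res^d U is the action  s |-> gl_act U (perm_mx s). *)
Definition res_act (U : glrep) (s : 'S_n) : 'M[C]_(gl_dim U) :=
  gl_act U (perm_mx s).

(* Linear maps C^a -> C^b are b x a matrices acting on column vectors. *)

Definition homGL (U' U : glrep) (A : 'M[C]_(gl_dim U, gl_dim U')) : Prop :=
  forall g, g \in unitmx -> A *m gl_act U' g = gl_act U g *m A.

Definition homSn (V V' : snrep) (B : 'M[C]_(sn_dim V', sn_dim V)) : Prop :=
  forall s, B *m sn_act V s = sn_act V' s *m B.

Definition homSn_res (U : glrep) (V : snrep) (B : 'M[C]_(sn_dim V, gl_dim U)) :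
  Prop := forall s, B *m res_act U s = sn_act V s *m B.

Definition in_Ind (V : snrep) (f : 'M[C]_n -> 'cV[C]_(sn_dim V)) : Prop :=
  (forall i, is_hpoly_fun (fun Q => f Q i 0)) /\
  (forall s Q, f (perm_mx s *m Q) = sn_act V s *m f Q).

Definition ind_act (V : snrep) (g : 'M[C]_n) (f : 'M[C]_n -> 'cV[C]_(sn_dim V))
  : 'M[C]_n -> 'cV[C]_(sn_dim V) := fun Q => f (Q *m g).

Definition ind_map (V V' : snrep) (B : 'M[C]_(sn_dim V', sn_dim V))
  (f : 'M[C]_n -> 'cV[C]_(sn_dim V)) : 'M[C]_n -> 'cV[C]_(sn_dim V') :=
  fun Q => B *m f Q.

Definition IndMap (U : glrep) (V : snrep) : Type :=
  'cV[C]_(gl_dim U) -> 'M[C]_n -> 'cV[C]_(sn_dim V).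

Definition homGL_Ind (U : glrep) (V : snrep) (T : IndMap U V) : Prop :=
  [/\ forall (a : C) u v Q, T (a *: u + v) Q = a *: T u Q + T v Q,
      forall u, in_Ind (T u)
    & forall g u, g \in unitmx -> forall Q,
        T (gl_act U g *m u) Q = ind_act g (T u) Q ].

Definition indmap_comb (U : glrep) (V : snrep) (a : C) (T1 T2 : IndMap U V)
  : IndMap U V := fun u Q => a *: T1 u Q + T2 u Q.

Definition indmap_comp (U' U : glrep) (V V' : snrep)
  (A : 'M[C]_(gl_dim U, gl_dim U')) (B : 'M[C]_(sn_dim V', sn_dim V))
  (T : IndMap U V) : IndMap U' V' :=
  fun u' => ind_map B (T (A *m u')).

End Defs.

From HB Require Import structures.
From mathcomp Require Import all_boot all_order all_algebra all_fingroup.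
From mathcomp Require Import complex reals.
From mathcomp Require Import mpoly.
Import GRing.Theory Num.Theory.
Set Implicit Arguments.
Unset Strict Implicit.
Unset Printing Implicit Defensive.
Local Open Scope ring_scope.

(* The isomorphism sends T to evaluation at the identity matrix, u |-> T u 1;
   its inverse sends B to u |-> (Q |-> B sigma(Q) u).  Everything rests on the
   density of GL_n in M_n for polynomial maps: on the line Q + t 1, the
   determinant is the monic polynomial char_poly (- Q) in t, so a polynomial
   in t that vanishes wherever det (Q + t 1) <> 0 vanishes identically.  This
   extends sigma(P Q) = sigma(P) sigma(Q) from invertible to arbitrary Q,
   which puts Q |-> B sigma(Q) u in Ind^d V, and it shows that an equivariant
   T, being determined on GL_n by T(-)(1), is determined everywhere. *)

Section PolynomialsOnLines.
Variable C : numFieldType.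

Lemma poly_eq0_of_horner0 (q : {poly C}) : (forall t, q.[t] = 0) -> q = 0.
Proof.
move=> q0; apply/eqP; apply: contraT => nz_q.
have := max_poly_roots nz_q (rs := [seq i%:R | i <- iota 0 (size q)]).
rewrite size_map size_iota ltnn; apply.
  by apply/allP => _ /mapP[i _ ->]; rewrite /root q0.
by rewrite map_inj_uniq ?iota_uniq // => i j /eqP; rewrite eqr_nat => /eqP.
Qed.

Lemma meval_line (N : nat) (p : {mpoly C[N]}) (v w : 'I_N -> C) t :
  (mmap polyC (fun k => (v k)%:P + 'X * (w k)%:P) p).[t] =
  p.@[fun k => v k + t * w k].
Proof.
rewrite mevalE /mmap horner_sum; apply: eq_bigr => m _.
rewrite hornerM hornerC /mmap1 horner_prod; congr (_ * _).
by apply: eq_bigr => k _; rewrite horner_exp hornerD hornerM hornerX !hornerC.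
Qed.

Variable n : nat.

Lemma horner_char_polyN (Q : 'M[C]_n) t :
  (char_poly (- Q)).[t] = \det (Q + t *: 1%:M).
Proof.
rewrite /char_poly -horner_evalE -det_map_mx; congr (\det _).
apply/matrixP => i j; rewrite !mxE /= horner_evalE.
by case: (i == j); rewrite ?mulr1n ?mulr0n ?hornerE ?opprK 1?addrC.
Qed.

Definition poly_on_line p q (F : 'M[C]_n -> 'M[C]_(p, q)) (Q Q' : 'M[C]_n) :=
  exists M : 'M[{poly C}]_(p, q),
    forall t, F (Q + t *: Q') = map_mx (horner_eval t) M.

Lemma hpoly_poly_on_line d p q (F : 'M[C]_n -> 'M[C]_(p, q)) :
  (forall i j, is_hpoly_fun d (fun X => F X i j)) ->
  forall Q Q', poly_on_line F Q Q'.
Proof.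
move=> hF Q Q'.
have /fin_all_exists[r Fr] : forall ij : 'I_p * 'I_q, exists r : {poly C},
    forall t, F (Q + t *: Q') ij.1 ij.2 = r.[t].
  case=> i j; have [P [_ FP]] := hF i j.
  exists (mmap polyC (fun k => (mx_vars Q k)%:P + 'X * (mx_vars Q' k)%:P) P).
  move=> t; rewrite FP meval_line; apply: meval_eq => k.
  by rewrite /mx_vars linearD linearZ /= !mxE.
exists (\matrix_(i, j) r (i, j)) => t; apply/matrixP => i j.
by rewrite !mxE (Fr (i, j)) horner_evalE.
Qed.

Lemma map_mx_horner_polyC p q t (A : 'M[C]_(p, q)) :
  map_mx (horner_eval t) (map_mx polyC A) = A.
Proof. by apply/matrixP => i j; rewrite !mxE horner_evalE hornerC. Qed.

Lemma poly_on_line_mull p q r (A : 'M[C]_(p, q)) (F : 'M[C]_n -> 'M[C]_(q, r))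
    Q Q' :
  poly_on_line F Q Q' -> poly_on_line (fun X => A *m F X) Q Q'.
Proof.
case=> M FM; exists (map_mx polyC A *m M) => t.
by rewrite map_mxM map_mx_horner_polyC FM.
Qed.

Lemma poly_on_line_mulr p q r (F : 'M[C]_n -> 'M[C]_(p, q)) (B : 'M[C]_(q, r))
    Q Q' :
  poly_on_line F Q Q' -> poly_on_line (fun X => F X *m B) Q Q'.
Proof.
case=> M FM; exists (M *m map_mx polyC B) => t.
by rewrite map_mxM map_mx_horner_polyC FM.
Qed.

Lemma poly_on_line_eq p q (F G : 'M[C]_n -> 'M[C]_(p, q)) Q :
  poly_on_line F Q 1%:M -> poly_on_line G Q 1%:M ->
  {in unitmx, F =1 G} -> F Q = G Q.
Proof.
move=> [M FM] [N GN] eqFG.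
suff eqMN : M = N by rewrite -[Q]addr0 -(scale0r 1%:M) FM GN eqMN.
apply/matrixP => i j; apply/eqP; rewrite -subr_eq0; apply/eqP.
have : (M i j - N i j) * char_poly (- Q) = 0.
  apply: poly_eq0_of_horner0 => t; rewrite hornerM horner_char_polyN.
  have [->|nz] := eqVneq (\det (Q + t *: 1%:M)) 0; first by rewrite mulr0.
  have uQt : Q + t *: 1%:M \in unitmx by rewrite unitmxE unitfE.
  have /matrixP/(_ i j) := eqFG _ uQt; rewrite FM GN !mxE !horner_evalE.
  by rewrite hornerD hornerN => ->; rewrite subrr mul0r.
move/eqP; rewrite mulf_eq0 (negbTE (monic_neq0 (char_poly_monic _))) orbF.
by move/eqP.
Qed.

End PolynomialsOnLines.

Section HomogeneousPolynomialFunctions.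
Variables (C : numFieldType) (n d : nat).
Implicit Types f g : 'M[C]_n -> C.

Lemma hpoly_ext f g : is_hpoly_fun d f -> f =1 g -> is_hpoly_fun d g.
Proof. by move=> [p [hp fp]] efg; exists p; split=> // Q; rewrite -efg. Qed.

Lemma hpoly0 : is_hpoly_fun d (fun _ : 'M[C]_n => 0).
Proof. by exists 0; split=> [|Q]; rewrite ?dhomog0 ?meval0. Qed.

Lemma hpolyD f g :
  is_hpoly_fun d f -> is_hpoly_fun d g -> is_hpoly_fun d (fun Q => f Q + g Q).
Proof.
move=> [p [hp fp]] [q [hq gq]]; exists (p + q).
by split=> [|Q]; rewrite ?dhomogD ?mevalD ?fp ?gq.
Qed.

Lemma hpolyZ c f : is_hpoly_fun d f -> is_hpoly_fun d (fun Q => c * f Q).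
Proof.
move=> [p [hp fp]]; exists (c *: p).
by split=> [|Q]; rewrite ?dhomogZ ?mevalZ ?fp.
Qed.

Lemma hpoly_sum (I : Type) (r : seq I) (F : I -> 'M[C]_n -> C) :
  (forall k, is_hpoly_fun d (F k)) ->
  is_hpoly_fun d (fun Q => \sum_(k <- r) F k Q).
Proof.
move=> hF; elim: r => [|k r IHr].
  by apply: hpoly_ext hpoly0 _ => Q; rewrite big_nil.
by apply: hpoly_ext (hpolyD (hF k) IHr) _ => Q; rewrite big_cons.
Qed.

Lemma hpoly_mulmx p q r s (A : 'M[C]_(p, q)) (F : 'M[C]_n -> 'M[C]_(q, r))
    (B : 'M[C]_(r, s)) :
  (forall i j, is_hpoly_fun d (fun Q => F Q i j)) ->
  forall i j, is_hpoly_fun d (fun Q => (A *m F Q *m B) i j).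
Proof.
move=> hF i j; apply: hpoly_ext (_ : is_hpoly_fun d
    (fun Q => \sum_l B l j * \sum_k A i k * F Q k l)) _ => [|Q].
  by apply: hpoly_sum => l; apply/hpolyZ/hpoly_sum => k; apply/hpolyZ.
by rewrite !mxE; apply: eq_bigr => l _; rewrite mxE mulrC; congr (_ * _).
Qed.

End HomogeneousPolynomialFunctions.

Section Adjunction.
Variables (C : numFieldType) (n d : nat).
Implicit Types (U : glrep C n d) (V : snrep C n).

Lemma gl_act_poly_on_line U Q Q' : poly_on_line (gl_act U) Q Q'.
Proof. exact/hpoly_poly_on_line/gl_poly. Qed.

Lemma gl_actMl U P Q : P \in unitmx ->
  gl_act U (P *m Q) = gl_act U P *m gl_act U Q.
Proof.
move=> uP; apply: (@poly_on_line_eq _ _ _ _ (fun X => gl_act U (P *m X))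
  (fun X => gl_act U P *m gl_act U X)) => [||X uX]; last exact: gl_actM.
  have [M PM] := gl_act_poly_on_line U (P *m Q) P.
  by exists M => t; rewrite mulmxDr -scalemxAr mulmx1 PM.
exact/poly_on_line_mull/gl_act_poly_on_line.
Qed.

Lemma gl_actMr U P Q : P \in unitmx ->
  gl_act U (Q *m P) = gl_act U Q *m gl_act U P.
Proof.
move=> uP; apply: (@poly_on_line_eq _ _ _ _ (fun X => gl_act U (X *m P))
  (fun X => gl_act U X *m gl_act U P)) => [||X uX]; last exact: gl_actM.
  have [M PM] := gl_act_poly_on_line U (Q *m P) P.
  by exists M => t; rewrite mulmxDl -scalemxAl mul1mx PM.
exact/poly_on_line_mulr/gl_act_poly_on_line.
Qed.

Lemma mulmx_cV_eq p q (A B : 'M[C]_(p, q)) :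
  (forall u : 'cV_q, A *m u = B *m u) -> A = B.
Proof.
move=> eqAB; apply/matrixP => i j.
by have /matrixP/(_ i 0) := eqAB (delta_mx j 0); rewrite -!colE !mxE.
Qed.

Definition linear_indmap U V (T : IndMap U V) :=
  forall (a : C) u v Q, T (a *: u + v) Q = a *: T u Q + T v Q.

Definition ev1 U V (T : IndMap U V) : 'M[C]_(sn_dim V, gl_dim U) :=
  \matrix_(i, j) T (delta_mx j 0) 1%:M i 0.

Lemma ev1_mulmx U V (T : IndMap U V) : linear_indmap T ->
  forall u, ev1 T *m u = T u 1%:M.
Proof.
move=> linT u; have T0 : T 0 1%:M = 0.
  have := linT 1 0 0 1%:M; rewrite !scale1r addr0 -{1}[T 0 _]addr0.
  by move=> /addrI /esym.
have T_sum : T (\sum_j u j 0 *: delta_mx j 0) 1%:M =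
              \sum_j u j 0 *: T (delta_mx j 0) 1%:M.
  by elim/big_rec2: _ => [|j v w _ <-]; rewrite ?T0 ?linT.
rewrite [in RHS](matrix_sum_delta u); under eq_bigr do rewrite big_ord1.
rewrite T_sum; apply/matrixP => i k; rewrite (ord1 k) !mxE summxE.
by apply: eq_bigr => j _; rewrite !mxE mulrC.
Qed.

Lemma ev1_comb U V a (T1 T2 : IndMap U V) :
  ev1 (indmap_comb a T1 T2) = a *: ev1 T1 + ev1 T2.
Proof. by apply/matrixP => i j; rewrite !mxE. Qed.

Lemma ev1_homSn_res U V (T : IndMap U V) : homGL_Ind T -> homSn_res (ev1 T).
Proof.
move=> [linT indT homT] s; apply: mulmx_cV_eq => u.
rewrite -!mulmxA !ev1_mulmx // (homT _ _ (unitmx_perm _ s)) /ind_act mul1mx.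
by rewrite -{1}[perm_mx s]mulmx1 (proj2 (indT u)).
Qed.

Lemma ev1_inj U V (T1 T2 : IndMap U V) : homGL_Ind T1 -> homGL_Ind T2 ->
  ev1 T1 = ev1 T2 -> forall u Q, T1 u Q = T2 u Q.
Proof.
move=> [lin1 ind1 hom1] [lin2 ind2 hom2] eqT u Q.
have eqT_unit : {in unitmx, T1 u =1 T2 u}.
  move=> g ug; rewrite -[g]mul1mx.
  by rewrite -!/(ind_act g _ 1%:M) -hom1 // -hom2 // -!ev1_mulmx // eqT.
by apply: poly_on_line_eq eqT_unit; apply: hpoly_poly_on_line => i j;
  rewrite (ord1 j); [exact: (ind1 u).1 | exact: (ind2 u).1].
Qed.

Definition ind_of U V (B : 'M[C]_(sn_dim V, gl_dim U)) : IndMap U V :=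
  fun u Q => B *m (gl_act U Q *m u).

Lemma ind_of_homGL_Ind U V (B : 'M[C]_(sn_dim V, gl_dim U)) :
  homSn_res B -> homGL_Ind (ind_of B).
Proof.
move=> homB; split=> [a u v Q|u|g u ug Q].
- by rewrite /ind_of !(mulmxDr, scalemxAr).
- split=> [i|s Q].
    apply: hpoly_ext (hpoly_mulmx B u (@gl_poly _ _ _ U) i 0) _ => Q.
    by rewrite /ind_of mulmxA.
  rewrite /ind_of gl_actMl ?unitmx_perm // !mulmxA.
  by rewrite -[gl_act U (perm_mx s)]/(res_act U s) homB.
- by rewrite /ind_of /ind_act gl_actMr // !mulmxA.
Qed.

Lemma ev1_ind_of U V (B : 'M[C]_(sn_dim V, gl_dim U)) : ev1 (ind_of B) = B.
Proof.
by apply/matrixP => i j; rewrite mxE /ind_of gl_act1 mul1mx -colE mxE.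
Qed.

Lemma linear_indmap_comp U' U V V' (A : 'M[C]_(gl_dim U, gl_dim U'))
    (B : 'M[C]_(sn_dim V', sn_dim V)) (T : IndMap U V) :
  linear_indmap T -> linear_indmap (indmap_comp A B T).
Proof.
move=> linT a u v Q.
by rewrite /indmap_comp /ind_map mulmxDr -scalemxAr linT mulmxDr -scalemxAr.
Qed.

Lemma ev1_indmap_comp U' U V V' (A : 'M[C]_(gl_dim U, gl_dim U'))
    (B : 'M[C]_(sn_dim V', sn_dim V)) (T : IndMap U V) :
  linear_indmap T -> ev1 (indmap_comp A B T) = B *m ev1 T *m A.
Proof.
move=> linT; apply: mulmx_cV_eq => u.
rewrite ev1_mulmx; last exact: linear_indmap_comp.
by rewrite -!mulmxA ev1_mulmx.
Qed.

End Adjunction.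

Theorem theorem2 (R : realType) (n d : nat) (hn : (0 < n)%N) :
  exists Phi : forall (U : glrep R[i] n d) (V : snrep R[i] n),
      IndMap U V -> 'M[R[i]]_(sn_dim V, gl_dim U),
    (forall U V,
      [/\ (* Phi maps Hom_GL(U, Ind^d V) into Hom_{S_n}(Res^d U, V) *)
          forall T, homGL_Ind T -> homSn_res (Phi U V T),
          (* linear *)
          forall a T1 T2, homGL_Ind T1 -> homGL_Ind T2 ->
            Phi U V (indmap_comb a T1 T2) = a *: Phi U V T1 + Phi U V T2,
          (* injective *)
          forall T1 T2, homGL_Ind T1 -> homGL_Ind T2 ->
            Phi U V T1 = Phi U V T2 -> forall u Q, T1 u Q = T2 u Q
        & (* surjective *)
          forall B, homSn_res B -> exists2 T, homGL_Ind T & Phi U V T = B])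
    /\
    (* naturality in U and V *)
    (forall (U' U : glrep R[i] n d) (V V' : snrep R[i] n)
            (A : 'M[R[i]]_(gl_dim U, gl_dim U'))
            (B : 'M[R[i]]_(sn_dim V', sn_dim V)) (T : IndMap U V),
        homGL A -> homSn B -> homGL_Ind T ->
        Phi U' V' (indmap_comp A B T) = B *m Phi U V T *m A).
Proof.
exists (@ev1 R[i] n d); split=> [U V|U' U V V' A B T _ _ [linT _ _]].
  split=> [T|a T1 T2 _ _|T1 T2|B homB]; first exact: ev1_homSn_res.
  - exact: ev1_comb.
  - exact: ev1_inj.
  - by exists (ind_of B); [exact: ind_of_homGL_Ind | exact: ev1_ind_of].
exact: ev1_indmap_comp.
Qed.
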